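(* Let $G$ be a finite group, $P$ a Sylow $p$-subgroup of $G$, and $N$ a normal subgroup of $G$ such that $P$ acts fixed-point-freely on $N$ by conjugation (i.e. $C_N(x)=1$ for every $1\neq x\in P$). Then for every $\chi\in{\rm Irr}(G)$ with $N\nleq\ker\chi$, the prime $p$ does not divide ${\rm cod}(\chi)=|G:\ker\chi|/\chi(1)$.
   Context: ${\rm Irr}(G)$ denotes the set of complex irreducible characters of $G$. *)

From mathcomp Require Import all_boot all_order all_algebra all_fingroup all_solvable all_field all_character.
Set Implicit Arguments. Unset Strict Implicit. Unset Printing Implicit Defensive.
Import GRing.Theory Num.Theory.
Local Open Scope ring_scope.

Definition cod (gT : finGroupType) (G : {group gT}) (chi : 'CF(G)) : algC :=
  (#|G : cfker chi|%g)%:R / chi 1%g.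

(* Since P acts fixed-point-freely on N, the group N P is a
   Frobenius group with kernel N and complement P.  Every irreducible
   constituent of the restriction of chi to N P is nontrivial on N, hence is
   induced from N and vanishes off N; so chi vanishes on P minus 1.  Then the
   restriction of chi to P is a multiple of the regular character of P, so
   |G|_p = |P| divides chi(1).  As |G : ker chi| = cod(chi) chi(1) divides
   |G|, the codegree cannot be divisible by p. *)

From mathcomp Require Import all_boot all_order all_algebra all_fingroup all_solvable all_field all_character.

Set Implicit Arguments.
Unset Strict Implicit.
Unset Printing Implicit Defensive.

Import GRing.Theory Num.Theory.
Local Open Scope ring_scope.

Section CodegreeSemiregular.

Variable gT : finGroupType.

Lemma dvdC_card_char1 (G : {group gT}) (phi : 'CF(G)) :
  phi \is a character -> {in G^#%g, forall x, phi x = 0} ->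
  (#|G|%:R %| phi 1%g)%C.
Proof.
move=> Nphi phi_G1; apply/dvdCP; exists '[phi, 1].
  by rewrite intr_nat // Cnat_cfdot_char ?cfun1_char.
rewrite cfdotE (bigD1 1%g) //= big1 ?addr0 => [|x /andP[Gx ntx]]; last first.
  by rewrite phi_G1 ?mul0r // !inE ntx.
by rewrite cfun11 conjC1 mulr1 mulrC mulrA mulfV ?mul1r ?neq0CG.
Qed.

Lemma Frobenius_irr_on_ker (H K : {group gT}) j :
  [Frobenius H with kernel K]%g -> ~~ (K \subset cfker 'chi[H]_j) ->
  'chi_j \in 'CF(H, K).
Proof.
move=> frobHK /(Frobenius_Ind_irrP frobHK)[k _ ->].
by have [_ _ nsKH _] := Frobenius_kerP frobHK; apply: cfInd_normal.
Qed.

(* Normality of N in G is what makes this work: by Clifford theory, the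
   principal character of N occurs in 'Res[N] 'chi_i only if N lies in ker 'chi_i. *)
Lemma Res_irr_constt_cfker (G H N : {group gT}) i j :
    (N <| G)%g -> N \subset H -> H \subset G ->
    j \in irr_constt ('Res[H, G] 'chi_i) ->
  N \subset cfker 'chi[H]_j -> N \subset cfker 'chi[G]_i.
Proof.
move=> nsNG sNH sHG Cj kerNj; apply: constt0_Res_cfker => //.
rewrite -(cfResRes _ sNH sHG).
apply: (constt_Res_trans (cfRes_char _ (irr_char i)) Cj).
rewrite irr_consttE (cfRes_sub_ker kerNj) irr0 cfdotZl cfnorm1 mulr1.
exact: irr1_neq0.
Qed.

Lemma Res_irr_Frobenius_on_ker (G H K : {group gT}) i :
    [Frobenius H with kernel K]%g -> (K <| G)%g -> H \subset G ->
    ~~ (K \subset cfker 'chi[G]_i) ->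
  'Res[H] 'chi_i \in 'CF(H, K).
Proof.
move=> frobHK nsKG sHG notKker.
have [_ /andP[sKH _] _ _] := Frobenius_kerP frobHK.
rewrite [X in X \in _]cfun_sum_constt; apply: rpred_sum => j Cj.
apply/memvZ/(Frobenius_irr_on_ker frobHK).
exact: contra (Res_irr_constt_cfker nsKG sKH sHG Cj) notKker.
Qed.

Lemma irr_vanish_semiregular (G N P : {group gT}) i :
    (N <| G)%g -> P \subset G -> semiregular N P ->
    ~~ (N \subset cfker 'chi[G]_i) ->
  {in P^#%g, forall x, 'chi_i x = 0}.
Proof.
move=> nsNG sPG regNP notNker x /setD1P[ntx Px].
have [sNG nNG] := andP nsNG; have nNP := subset_trans sPG nNG.
have tiNP : (N :&: P = 1)%g by apply/coprime_TIg/regular_norm_coprime.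
have ntN : (N :!=: 1)%g by apply: contraNneq notNker => ->; apply: sub1G.
have ntP : (P :!=: 1)%g by apply/trivgPn; exists x.
have frobNP : [Frobenius N <*> P = N ><| P]%g.
  by apply/Frobenius_semiregularP; rewrite ?sdprodEY.
have sNPG : (N <*> P \subset G)%g by rewrite join_subG sNG.
have NPx : x \in (N <*> P)%g by rewrite mem_gen // inE Px orbT.
have notNx : x \notin N.
  by apply: contra ntx => Nx; apply/eqP/set1gP; rewrite -tiNP inE Nx.
rewrite -(cfResE _ sNPG NPx); apply: cfun_on0 notNx.
exact: Res_irr_Frobenius_on_ker (FrobeniusWker frobNP) nsNG sNPG notNker.
Qed.

Lemma cod_irr_pndvd (G : {group gT}) (p : nat) i :
  prime p -> ((#|G|`_p)%:R %| 'chi[G]_i 1%g)%C -> ~~ (p%:R %| cod 'chi_i)%C.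
Proof.
move=> pr_p; have p_gt0 := prime_gt0 pr_p.
have /natrP[d chi1] := Cnat_irr1 i; rewrite /cod chi1 dvdC_nat => pG_d.
have d_gt0 : (0 < d)%N by rewrite lt0n -(eqr_nat algC) -chi1 irr1_neq0.
apply/negP => /dvdCP_nat[||n]; rewrite ?divr_ge0 ?ler0n //.
move/(canRL (divfK _)); rewrite pnatr_eq0 -lt0n d_gt0 -!natrM => /(_ isT).
move/eqP; rewrite eqr_nat => /eqP defGK.
have : (#|G|`_p * p %| #|G|)%N.
  apply: dvdn_trans (dvdn_indexg G (cfker 'chi_i)).
  by rewrite defGK mulnC -mulnA dvdn_mull // dvdn_pmul2l.
by rewrite p_part -expnSr pfactor_dvdn // ltnn.
Qed.

End CodegreeSemiregular.

Theorem mainTheorem3 (gT : finGroupType) (G P N : {group gT}) (p : nat) :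
  prime p ->
  (P \in 'Syl_p(G))%g ->
  (N <| G)%g ->
  (forall x, x \in P -> x != 1%g -> ('C_N[x] = 1)%g) ->
  forall i : Iirr G, ~~ (N \subset cfker 'chi_i)%g ->
    ~~ (p%:R %| cod 'chi_i)%C.
Proof.
move=> pr_p; rewrite inE => sylP nsNG regP i notNker.
have sPG : (P \subset G)%g by case/andP: sylP.
have regNP : semiregular N P by move=> x /setD1P[ntx Px]; apply: regP.
apply: cod_irr_pndvd => //; rewrite -(card_Hall sylP) -(cfRes1 P).
apply: dvdC_card_char1; first by rewrite cfRes_char ?irr_char.
move=> x /[dup] P1x /setD1P[_ Px].
by rewrite cfResE // (irr_vanish_semiregular nsNG sPG regNP).
Qed.
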